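(* Assume $d_{min}\ge d_{close}+d_{open}$ (i.e. $W\ge d_{open}$). Let $R$ be a regular run. If Dir is set to open at some moment $\alpha$, then Dir = open over the interval $(\alpha,\alpha+d_{open})$.
   Context: Setting (evolving algebra for the railroad crossing). States are structures over a vocabulary containing: a finite universe Tracks; the reals and ExtendedReals $=\mathbb{R}\cup\{\infty\}$ with standard $<$ and $+$ ($\infty$ largest); a nullary real-valued symbol $\mathrm{CT}$ (current time); positive real constants $d_{close},d_{open},d_{min},d_{max}$ with $d_{close}<d_{min}\le d_{max}$; a unary function TrackStatus from Tracks to $\{\text{empty},\text{coming},\text{incrossing}\}$; a unary function Deadline from Tracks to ExtendedReals; a nullary Dir with values in $\{\text{open},\text{close}\}$; a nullary GateStatus with values in $\{\text{opened},\text{closed}\}$. Put $W=d_{min}-d_{close}$ and $\Delta_{close}=d_{close}+(d_{max}-d_{min})=d_{max}-W$. For a track $x$, $s(x)$ is the condition [$\mathrm{TrackStatus}(x)=\text{empty}$ or $\mathrm{CT}+d_{open}<\mathrm{Deadline}(x)$], and SafeToOpen is $\forall x\in\mathrm{Tracks}\ s(x)$. The program has two modules (agents). Gate: simultaneously OpenGate ''if Dir=open then GateStatus:=opened'' and CloseGate ''if Dir=close then GateStatus:=closed''. Controller: simultaneously, for every track $x$, SetDeadline$(x)$ ''if TrackStatus$(x)$=coming and Deadline$(x)=\infty$ then Deadline$(x):=\mathrm{CT}+W$'', SignalClose$(x)$ ''if $\mathrm{CT}=$Deadline$(x)$ then Dir:=close'', ClearDeadline$(x)$ ''if TrackStatus$(x)$=empty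 and Deadline$(x)<\infty$ then Deadline$(x):=\infty$'', together with SignalOpen ''if Dir=close and SafeToOpen then Dir:=open''. Executing a module means computing all updates it generates in the current state and performing them simultaneously (nothing happens if the update set is inconsistent). A module is enabled at a state if its update set is consistent and contains an update that changes the state. TrackStatus is external (changed only by the environment); Deadline, Dir, GateStatus are internal (changed only by the modules); other symbols are static. Runs: for $t\mapsto R(t)$, $t\in[0,\infty)$, let $\rho(t)$ be the reduct of $R(t)$ without CT. $R$ is a pre-run if all $R(t)$ share a superuniverse, $\mathrm{CT}=t$ in $R(t)$, and for every $\tau>0$ there are $0=t_0<\dots<t_n=\tau$ with $\rho$ constant on each $(t_i,t_{i+1})$. For a term $e$ (free variables fixed), $e_t$ is its value in $R(t)$, $e_{t+}$ (resp. $e_{t-}$, $t>0$) its constant value on some $(t,t+\epsilon)$ (resp. $(t-\epsilon,t)$); likewise $\rho(t\pm)$. $e$ holds over an interval if it holds at each point; $e$ becomes (is set to) $a$ at $t$ if $e_{t-}\ne a=e_t$ or $e_t\neq a=e_{t+}$. A pre-run is a run if (i) whenever $\rho(t+)\neq\rho(t)$, $\rho(t+)$ is the CT-free reduct of the result of executing some modules at $R(t)$ (these agents fire at $t$), with external functions equal in $\rho(t)$ and $\rho(t+)$; (ii) whenever $t>0$ and $\rho(t)\ne\rho(t-)$, they differ only in external functions. An agent is immediate if it fires at every moment it is enabled; bounded if immediate or there is $b>0$ with no interval $(t,t+b)$ over which it is enabled but never fires. Initial states: TrackStatus$(x)$=empty and Deadline$(x)=\infty$ for every track $x$. A regular run is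 a run $R$ with $R(0)$ initial such that: (Train Motion) for each track $x$ there is a finite or infinite sequence $0=t_0<t_1<t_2<\cdots$ (the significant moments of $x$) with TrackStatus$(x)$=empty over each $[t_{3i},t_{3i+1})$, =coming over each $[t_{3i+1},t_{3i+2})$ where $d_{min}\le t_{3i+2}-t_{3i+1}\le d_{max}$, =incrossing over each $[t_{3i+2},t_{3i+3})$, and, if the sequence is finite with last element $t_k$, then $3\mid k$ and TrackStatus$(x)$=empty over $[t_k,\infty)$; (Controller Timing) Controller is immediate; (Gate Timing) Gate is bounded, there is no interval $(t,t+d_{close})$ over which Dir=close and GateStatus=opened both hold, and no interval $(t,t+d_{open})$ over which Dir=open and GateStatus=closed both hold. *)

From Stdlib Require Import Reals Lra List.
Open Scope R_scope.
Set Implicit Arguments.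

Record params := Params { d_close : R; d_open : R; d_min : R; d_max : R }.

Definition valid_params (p : params) : Prop :=
  0 < d_close p /\ 0 < d_open p /\ 0 < d_min p /\ 0 < d_max p /\
  d_close p < d_min p /\ d_min p <= d_max p.

Definition W (p : params) : R := d_min p - d_close p.

(** Extended reals R ∪ {∞}: [None] stands for ∞. *)
Definition ExtR := option R.
Definition ext_lt (a b : ExtR) : Prop :=
  match a, b with
  | Some x, Some y => x < y
  | Some _, None => True
  | None, _ => False
  end.

Inductive tstatus := empty | coming | incrossing.
Inductive dir := open | close.
Inductive gstatus := opened | closed.

Definition FiniteType (T : Type) : Prop := exists l : list T, forall x : T, In x l.

(** CT-free part of a state (the static symbols are fixed by [params]). *)
Record State (Tr : Type) := MkState {
  TrackStatus : Tr -> tstatus;   (* external *)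
  Deadline : Tr -> ExtR;
  Dir : dir;
  GateStatus : gstatus
}.
Arguments MkState {Tr}.

Inductive loc (Tr : Type) := LDeadline (x : Tr) | LDir | LGateStatus.
Arguments LDir {Tr}.
Arguments LGateStatus {Tr}.
Inductive value := VExt (e : ExtR) | VDir (d : dir) | VGate (g : gstatus).

Definition update (Tr : Type) := (loc Tr * value)%type.
Definition updset (Tr : Type) := update Tr -> Prop.

Definition val_at {Tr} (s : State Tr) (l : loc Tr) : value :=
  match l with
  | LDeadline x => VExt (Deadline s x)
  | LDir => VDir (Dir s)
  | LGateStatus => VGate (GateStatus s)
  end.

Definition consistent {Tr} (U : updset Tr) : Prop :=
  forall l v1 v2, U (l, v1) -> U (l, v2) -> v1 = v2.

Definition s_track {Tr} (p : params) (ct : R) (s : State Tr) (x : Tr) : Prop :=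
  TrackStatus s x = empty \/ ext_lt (Some (ct + d_open p)) (Deadline s x).
Definition SafeToOpen {Tr} (p : params) (ct : R) (s : State Tr) : Prop :=
  forall x : Tr, s_track p ct s x.

Inductive agent := Gate | Controller.

Definition gate_updates {Tr} (s : State Tr) : updset Tr := fun u =>
  (Dir s = open /\ u = (LGateStatus, VGate opened)) \/
  (Dir s = close /\ u = (LGateStatus, VGate closed)).

Definition ctrl_updates {Tr} (p : params) (ct : R) (s : State Tr) : updset Tr := fun u =>
  (exists x, TrackStatus s x = coming /\ Deadline s x = None /\
             u = (LDeadline x, VExt (Some (ct + W p)))) \/
  (exists x, Deadline s x = Some ct /\ u = (LDir, VDir close)) \/
  (exists x, TrackStatus s x = empty /\ Deadline s x <> None /\
             u = (LDeadline x, VExt None)) \/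
  (Dir s = close /\ SafeToOpen p ct s /\ u = (LDir, VDir open)).

Definition updates {Tr} (p : params) (A : agent) (ct : R) (s : State Tr) : updset Tr :=
  match A with
  | Gate => gate_updates s
  | Controller => ctrl_updates p ct s
  end.

Definition enabled {Tr} (p : params) (A : agent) (ct : R) (s : State Tr) : Prop :=
  consistent (updates p A ct s) /\
  exists l v, updates p A ct s (l, v) /\ val_at s l <> v.

(** Each module's update set is performed if consistent (otherwise that module does
    nothing); the modules update disjoint locations; external functions unchanged. *)
Definition exec {Tr} (p : params) (M : agent -> Prop) (ct : R) (s s' : State Tr) : Prop :=
  let E : updset Tr := fun u =>
    exists A, M A /\ consistent (updates p A ct s) /\ updates p A ct s u in
  TrackStatus s' = TrackStatus s /\
  forall l : loc Tr,
    (exists v, E (l, v) /\ val_at s' l = v) \/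
    ((forall v, ~ E (l, v)) /\ val_at s' l = val_at s l).

(** Runs: [Rn t] is the CT-free reduct ρ(t) of R(t) (CT = t implicitly). *)
Definition right_lim {Tr} (Rn : R -> State Tr) (t : R) (s : State Tr) : Prop :=
  exists eps, 0 < eps /\ forall u, t < u < t + eps -> Rn u = s.
Definition left_lim {Tr} (Rn : R -> State Tr) (t : R) (s : State Tr) : Prop :=
  exists eps, 0 < eps /\ forall u, t - eps < u < t -> Rn u = s.

Definition pre_run {Tr} (Rn : R -> State Tr) : Prop :=
  forall tau, 0 < tau ->
    exists (ts : nat -> R) (n : nat),
      ts 0%nat = 0 /\ ts n = tau /\
      (forall i, (i < n)%nat -> ts i < ts (S i)) /\
      (forall i, (i < n)%nat -> forall u v,
          ts i < u < ts (S i) -> ts i < v < ts (S i) -> Rn u = Rn v).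

Definition is_run {Tr} (p : params) (Rn : R -> State Tr) : Prop :=
  pre_run Rn /\
  (forall t s', 0 <= t -> right_lim Rn t s' -> s' <> Rn t ->
     exists M, exec p M t (Rn t) s') /\
  (forall t s', 0 < t -> left_lim Rn t s' -> s' <> Rn t ->
     Deadline s' = Deadline (Rn t) /\ Dir s' = Dir (Rn t) /\
     GateStatus s' = GateStatus (Rn t)).

Definition fires {Tr} (p : params) (Rn : R -> State Tr) (A : agent) (t : R) : Prop :=
  exists s', right_lim Rn t s' /\ s' <> Rn t /\
    exists M : agent -> Prop, M A /\ exec p M t (Rn t) s'.

Definition immediate {Tr} (p : params) (Rn : R -> State Tr) (A : agent) : Prop :=
  forall t, 0 <= t -> enabled p A t (Rn t) -> fires p Rn A t.

Definition bounded {Tr} (p : params) (Rn : R -> State Tr) (A : agent) : Prop :=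
  immediate p Rn A \/
  exists b, 0 < b /\
    forall t, 0 <= t ->
      ~ (forall u, t < u < t + b -> enabled p A u (Rn u) /\ ~ fires p Rn A u).

Definition initial_state {Tr} (s : State Tr) : Prop :=
  forall x, TrackStatus s x = empty /\ Deadline s x = None.

(** index n belongs to the sequence of significant moments (None = infinite,
    Some k = last index is k) *)
Definition in_seq (len : option nat) (n : nat) : Prop :=
  match len with None => True | Some k => (n <= k)%nat end.

Definition train_motion {Tr} (p : params) (Rn : R -> State Tr) (x : Tr) : Prop :=
  exists (tm : nat -> R) (len : option nat),
    tm 0%nat = 0 /\
    (forall i, in_seq len (S i) -> tm i < tm (S i)) /\
    (forall i, in_seq len (3 * i + 1) ->
       forall t, tm (3 * i)%nat <= t < tm (3 * i + 1)%nat ->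
         TrackStatus (Rn t) x = empty) /\
    (forall i, in_seq len (3 * i + 2) ->
       (forall t, tm (3 * i + 1)%nat <= t < tm (3 * i + 2)%nat ->
          TrackStatus (Rn t) x = coming) /\
       d_min p <= tm (3 * i + 2)%nat - tm (3 * i + 1)%nat <= d_max p) /\
    (forall i, in_seq len (3 * i + 3) ->
       forall t, tm (3 * i + 2)%nat <= t < tm (3 * i + 3)%nat ->
         TrackStatus (Rn t) x = incrossing) /\
    (forall k, len = Some k ->
       (exists j, k = (3 * j)%nat) /\
       forall t, tm k <= t -> TrackStatus (Rn t) x = empty).

Definition regular_run {Tr} (p : params) (Rn : R -> State Tr) : Prop :=
  is_run p Rn /\ initial_state (Rn 0) /\
  (forall x, train_motion p Rn x) /\
  immediate p Rn Controller /\
  bounded p Rn Gate /\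
  (forall t, 0 <= t ->
     ~ (forall u, t < u < t + d_close p -> Dir (Rn u) = close /\ GateStatus (Rn u) = opened)) /\
  (forall t, 0 <= t ->
     ~ (forall u, t < u < t + d_open p -> Dir (Rn u) = open /\ GateStatus (Rn u) = closed)).

Definition Dir_left {Tr} (Rn : R -> State Tr) (t : R) (d : dir) : Prop :=
  exists eps, 0 < eps /\ forall u, t - eps < u < t -> Dir (Rn u) = d.
Definition Dir_right {Tr} (Rn : R -> State Tr) (t : R) (d : dir) : Prop :=
  exists eps, 0 < eps /\ forall u, t < u < t + eps -> Dir (Rn u) = d.

Definition Dir_set_to {Tr} (Rn : R -> State Tr) (t : R) (a : dir) : Prop :=
  (0 < t /\ exists d, Dir_left Rn t d /\ d <> a /\ Dir (Rn t) = a) \/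
  (Dir (Rn t) <> a /\ Dir_right Rn t a).

(* When Dir is set to open at alpha, SignalOpen fired, so every track is either
   empty (its deadline is cleared in the same step) or has its deadline beyond
   T = alpha + d_open.  The invariant "Dir = open and no deadline before T" is then
   preserved by every step at a time t in (alpha, T): SignalClose would need a
   deadline equal to t < T, and SetDeadline only creates deadlines t + W >= T
   because W >= d_open.  Left limits of a run change only external functions, so
   the invariant propagates over the whole piecewise constant run on (alpha, T). *)

From Stdlib Require Import Reals Lra Lia Classical.
Open Scope R_scope.
Set Implicit Arguments.

Definition ext_le (a b : ExtR) : Prop :=
  match a, b with
  | Some x, Some y => x <= y
  | _, None => True
  | None, Some _ => False
  end.

Lemma ext_lt_le {a b : ExtR} : ext_lt a b -> ext_le a b.
Proof. destruct a, b; simpl; intros; auto; lra. Qed.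

Definition open_until {Tr} (T : R) (s : State Tr) : Prop :=
  Dir s = open /\ forall x, ext_le (Some T) (Deadline s x).

Lemma open_until_transfer {Tr} {T : R} {s s' : State Tr} :
  Dir s = Dir s' -> Deadline s = Deadline s' -> open_until T s -> open_until T s'.
Proof. intros EDir EDl [Hopen Hdl]. split; [congruence|]. rewrite <- EDl. exact Hdl. Qed.

Section Updates.

Variables (Tr : Type) (p : params).

Lemma updates_Dir_cases (A : agent) (t : R) (s : State Tr) (d : dir) :
  updates p A t s (LDir, VDir d) ->
  A = Controller /\
  ((d = close /\ exists x, Deadline s x = Some t) \/
   (d = open /\ Dir s = close /\ SafeToOpen p t s)).
Proof.
  destruct A; simpl.
  - intros [[_ E] | [_ E]]; discriminate.
  - intros [[x [_ [_ E]]] | [[x [Hx E]] | [[x [_ [_ E]]] | [Hc [Hsafe E]]]]];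
      inversion E; subst; split; eauto.
Qed.

Lemma updates_Deadline_cases (A : agent) (t : R) (s : State Tr) (x : Tr) (v : ExtR) :
  updates p A t s (LDeadline x, VExt v) -> v = Some (t + W p) \/ v = None.
Proof.
  destruct A; simpl.
  - intros [[_ E] | [_ E]]; discriminate.
  - intros [[y [_ [_ E]]] | [[y [_ E]] | [[y [_ [_ E]]] | [_ [_ E]]]]];
      inversion E; auto.
Qed.

Arguments updates_Dir_cases {A t s d}.
Arguments updates_Deadline_cases {A t s x v}.

Lemma exec_Dir_cases (M : agent -> Prop) (t : R) (s s' : State Tr) :
  exec p M t s s' ->
  Dir s' = Dir s \/
  exists A, M A /\ consistent (updates p A t s) /\ updates p A t s (LDir, VDir (Dir s')).
Proof.
  intros [_ Hloc]. destruct (Hloc LDir) as [[v [[A [HM [Hc Hu]]] Hv]] | [_ Hv]];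
    simpl in Hv; subst.
  - right. eauto.
  - left. congruence.
Qed.

Lemma exec_Deadline_cases (M : agent -> Prop) (t : R) (s s' : State Tr) (x : Tr) :
  exec p M t s s' ->
  (Deadline s' x = Deadline s x /\
   forall A v, M A -> consistent (updates p A t s) -> ~ updates p A t s (LDeadline x, v)) \/
  exists A, updates p A t s (LDeadline x, VExt (Deadline s' x)).
Proof.
  intros [_ Hloc]. destruct (Hloc (LDeadline x)) as [[v [[A [_ [_ Hu]]] Hv]] | [Hnone Hv]];
    simpl in Hv; subst.
  - right. eauto.
  - left. split; [congruence|]. intros A v HM Hc Hu. apply (Hnone v). eauto.
Qed.

Lemma exec_nothing (t : R) (s : State Tr) : exec p (fun _ => False) t s s.
Proof. split; [reflexivity|]. intros l. right. split; [|reflexivity]. firstorder. Qed.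

Lemma exec_preserves_open_until (M : agent -> Prop) (t T : R) (s s' : State Tr) :
  t < T -> T <= t + W p -> open_until T s -> exec p M t s s' -> open_until T s'.
Proof.
  intros HtT HTW [Hopen Hdl] Hex. split.
  - destruct (exec_Dir_cases Hex) as [E | [A [_ [_ Hu]]]]; [congruence|].
    destruct (updates_Dir_cases Hu) as [_ [[_ [x Hx]] | [E _]]]; [|exact E].
    specialize (Hdl x). rewrite Hx in Hdl. simpl in Hdl. lra.
  - intros x. destruct (exec_Deadline_cases x Hex) as [[E _] | [A Hu]].
    + rewrite E. apply Hdl.
    + destruct (updates_Deadline_cases Hu) as [E | E]; rewrite E; simpl; [lra | exact I].
Qed.

(* A track that is empty but still carries a deadline does not satisfy the
   second disjunct of s(x); ClearDeadline removes that deadline in the very step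
   in which SignalOpen fires, because the Controller's update set is performed. *)
Lemma exec_signal_open_open_until (M : agent -> Prop) (t : R) (s s' : State Tr) :
  d_open p <= W p -> Dir s = close -> Dir s' = open -> exec p M t s s' ->
  open_until (t + d_open p) s'.
Proof.
  intros HW Hclose Hopen Hex. split; [exact Hopen|].
  destruct (exec_Dir_cases Hex) as [E | [A [HM [Hcons Hu]]]]; [congruence|].
  rewrite Hopen in Hu.
  destruct (updates_Dir_cases Hu) as [-> [[E _] | [_ [_ Hsafe]]]]; [discriminate|].
  intros x. destruct (exec_Deadline_cases x Hex) as [[E Hkept] | [B Hu']].
  - rewrite E. destruct (Hsafe x) as [Hempty | Hlate]; [|exact (ext_lt_le Hlate)].
    destruct (Deadline s x) as [d|] eqn:Ed; [|exact I]. exfalso.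
    apply (Hkept Controller (VExt None) HM Hcons). simpl.
    right; right; left. exists x. rewrite Ed. repeat split; auto; discriminate.
  - destruct (updates_Deadline_cases Hu') as [E | E]; rewrite E; simpl; [lra | exact I].
Qed.

End Updates.

Lemma increasing_upto_le (ts : nat -> R) (n : nat) :
  (forall i, (i < n)%nat -> ts i < ts (S i)) -> forall j, (j <= n)%nat -> ts j <= ts n.
Proof.
  intros Hlt j Hj. revert Hlt. induction Hj as [|m Hjm IH]; intros Hlt; [lra|].
  specialize (IH (fun i Hi => Hlt i (Nat.lt_lt_succ_r i m Hi))).
  specialize (Hlt m (Nat.lt_succ_diag_r m)). lra.
Qed.

Lemma common_left_point (t e1 e2 : R) :
  0 < e1 -> 0 < e2 -> exists u, t - e1 < u < t /\ t - e2 < u < t.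
Proof.
  intros H1 H2. exists (t - Rmin e1 e2 / 2).
  pose proof (Rmin_l e1 e2). pose proof (Rmin_r e1 e2). pose proof (Rmin_pos e1 e2 H1 H2).
  lra.
Qed.

Lemma common_right_point (t e1 e2 : R) :
  0 < e1 -> 0 < e2 -> exists u, t < u < t + e1 /\ t < u < t + e2.
Proof.
  intros H1 H2. destruct (common_left_point t H1 H2) as [u Hu].
  exists (2 * t - u). lra.
Qed.

Section PreRun.

Variables (Tr : Type) (Rn : R -> State Tr).
Hypothesis Hpre : pre_run Rn.

Lemma pre_run_left_lim (t : R) : 0 < t -> exists s, left_lim Rn t s.
Proof.
  intros Ht. destruct (Hpre Ht) as [ts [n [H0 [Hn [Hlt Hconst]]]]].
  destruct n as [|m]; [lra|].
  specialize (Hlt m (Nat.lt_succ_diag_r m)).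
  exists (Rn ((ts m + t) / 2)), (t - ts m). split; [lra|].
  intros u Hu. apply (Hconst m (Nat.lt_succ_diag_r m)); lra.
Qed.

(* The partition of [0, b] given by [pre_run] is walked piece by piece: on each
   open piece the state is the right limit at its left end, and each right end is
   reached from the open piece by a left limit. *)
Lemma pre_run_interval_ind (P : State Tr -> Prop) (a b : R) :
  0 <= a < b ->
  (forall s, right_lim Rn a s -> P s) ->
  (forall t s, a < t < b -> P (Rn t) -> right_lim Rn t s -> P s) ->
  (forall t s, a < t <= b -> left_lim Rn t s -> P s -> P (Rn t)) ->
  forall u, a < u <= b -> P (Rn u).
Proof.
  intros Hab Hstart Hright Hleft.
  destruct (Hpre (tau := b) ltac:(lra)) as [ts [n [H0 [Hn [Hlt Hconst]]]]].
  assert (Hle := increasing_upto_le ts Hlt).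
  enough (Hpiece : forall i, (i <= n)%nat -> forall u, a < u <= ts i -> P (Rn u)).
  { intros u Hu. apply (Hpiece n (le_n n)). lra. }
  induction i as [|i IH]; intros Hi u Hu; [lra|].
  destruct (Rle_lt_dec u (ts i)) as [Hui | Hiu]; [apply IH; [lia | lra]|].
  assert (Hstep := Hlt i ltac:(lia)). assert (Hb := Hle (S i) Hi).
  set (s0 := Rn ((ts i + ts (S i)) / 2)).
  assert (Hs0 : forall v, ts i < v < ts (S i) -> Rn v = s0)
    by (intros v Hv; apply (Hconst i ltac:(lia)); lra).
  assert (Ps0 : P s0).
  { destruct (Rle_lt_dec (ts i) a) as [Hia | Hai].
    - apply Hstart. exists (ts (S i) - a). split; [lra|].
      intros w Hw. apply Hs0. lra.
    - apply (Hright (ts i)); [lra | apply IH; [lia | lra]|].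
      exists (ts (S i) - ts i). split; [lra|]. intros w Hw. apply Hs0. lra. }
  destruct (Rlt_le_dec u (ts (S i))) as [Hu' | Hu']; [rewrite Hs0; [exact Ps0 | lra]|].
  replace u with (ts (S i)) by lra.
  apply (Hleft (ts (S i)) s0); [lra | | exact Ps0].
  exists (ts (S i) - ts i). split; [lra|]. intros w Hw. apply Hs0. lra.
Qed.

End PreRun.

Section Run.

Variables (Tr : Type) (p : params) (Rn : R -> State Tr).
Hypothesis Hrun : is_run p Rn.

Lemma run_left_lim_internal (t : R) (s : State Tr) :
  0 < t -> left_lim Rn t s -> Deadline s = Deadline (Rn t) /\ Dir s = Dir (Rn t).
Proof.
  intros Ht Hl. destruct (classic (s = Rn t)) as [-> | Hne]; [auto|].
  destruct Hrun as [_ [_ Hii]]. destruct (Hii t s Ht Hl Hne) as [E1 [E2 _]]. auto.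
Qed.

Lemma run_right_lim_exec (t : R) (s : State Tr) :
  0 <= t -> right_lim Rn t s -> exists M, exec p M t (Rn t) s.
Proof.
  intros Ht Hr. destruct (classic (s = Rn t)) as [-> | Hne].
  - exists (fun _ => False). apply exec_nothing.
  - destruct Hrun as [_ [Hi _]]. exact (Hi t s Ht Hr Hne).
Qed.

Lemma run_Dir_left_lim (t : R) (d : dir) : 0 < t -> Dir_left Rn t d -> Dir (Rn t) = d.
Proof.
  intros Ht [eps [Heps Hd]].
  destruct (pre_run_left_lim (proj1 Hrun) Ht) as [s [e [He Hs]]].
  destruct (common_left_point t Heps He) as [u [Hu1 Hu2]].
  rewrite <- (proj2 (run_left_lim_internal Ht (ex_intro _ e (conj He Hs)))).
  rewrite <- (Hs u Hu2). exact (Hd u Hu1).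
Qed.

Lemma run_Dir_set_to (t : R) (a : dir) :
  Dir_set_to Rn t a -> Dir (Rn t) <> a /\ Dir_right Rn t a.
Proof.
  intros [[Ht [d [Hleft [Hda Hta]]]] | Hright]; [|exact Hright].
  exfalso. apply Hda. rewrite <- (run_Dir_left_lim Ht Hleft). exact Hta.
Qed.

Lemma run_open_until_after_signal_open (alpha : R) :
  0 <= alpha -> 0 < d_open p -> d_open p <= W p ->
  Dir (Rn alpha) = close -> Dir_right Rn alpha open ->
  forall u, alpha < u <= alpha + d_open p -> open_until (alpha + d_open p) (Rn u).
Proof.
  intros Ha Hdo HW Hclose [eps [Heps Hopen]].
  apply (pre_run_interval_ind (proj1 Hrun)); [lra | | |].
  - intros s [e [He Hs]].
    destruct (run_right_lim_exec Ha (ex_intro _ e (conj He Hs))) as [M HM].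
    destruct (common_right_point alpha Heps He) as [u [Hu1 Hu2]].
    refine (exec_signal_open_open_until HW Hclose _ HM).
    rewrite <- (Hs u Hu2). exact (Hopen u Hu1).
  - intros t s Ht Hinv Hr. destruct (run_right_lim_exec (t := t) ltac:(lra) Hr) as [M HM].
    refine (exec_preserves_open_until _ _ Hinv HM); lra.
  - intros t s Ht Hl Hinv. destruct (run_left_lim_internal (t := t) ltac:(lra) Hl) as [E1 E2].
    exact (open_until_transfer E2 E1 Hinv).
Qed.

End Run.

Theorem mainTheorem13 (Tr : Type) (p : params) (Rn : R -> State Tr) (alpha : R) :
  FiniteType Tr ->
  valid_params p ->
  d_close p + d_open p <= d_min p ->
  regular_run p Rn ->
  0 <= alpha ->
  Dir_set_to Rn alpha open ->
  forall t, alpha < t < alpha + d_open p -> Dir (Rn t) = open.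
Proof.
  intros _ [_ [Hdo _]] Hd [Hrun _] Ha Hset t Ht.
  assert (HW : d_open p <= W p) by (unfold W; lra).
  destruct (run_Dir_set_to Hrun Hset) as [Hnot_open Hright].
  assert (Hclose : Dir (Rn alpha) = close) by (destruct (Dir (Rn alpha)); congruence).
  apply (run_open_until_after_signal_open Hrun Ha Hdo HW Hclose Hright). lra.
Qed.
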